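(* Let $\boldsymbol\xi=(\xi_1,\dots,\xi_n)$ be the indicator vector of the output of binary-tree pivotal sampling on a fixed full binary tree with leaves $[n]$ and leaf probabilities with integer sum. For every $\mathcal S\subseteq[n]$ with $\Pr[\xi_l=1\ \forall l\in\mathcal S]>0$ and all distinct $i,j\in[n]\setminus\mathcal S$, $$\Pr[\xi_i=1\mid \xi_l=1\ \forall l\in\mathcal S]\;\Pr[\xi_j=1\mid \xi_l=1\ \forall l\in\mathcal S]\;\ge\;\Pr[\xi_i=1,\ \xi_j=1\mid \xi_l=1\ \forall l\in\mathcal S].$$
   Context: Binary-tree pivotal sampling: let $T$ be a full binary tree whose leaves are identified with an index set, and let $q_i\in[0,1]$ be leaf probabilities with integer sum. Each node can store an index together with a current probability; initially each leaf $i$ stores $i$ with probability $q_i$, and the output set $\mathcal S_{\rm out}$ is empty. Repeatedly choose two sibling nodes that both store indices, say $i$ with probability $q_i$ and $j$ with probability $q_j$, with parent $P$, and remove them. If $q_i+q_j\le1$: with probability $q_i/(q_i+q_j)$ store $i$ at $P$ with probability $q_i+q_j$ ($j$ is rejected), otherwise store $j$ at $P$ with probability $q_i+q_j$ ($i$ is rejected). If $q_i+q_j>1$: with probability $(1-q_i)/(2-q_i-q_j)$ put $j$ into $\mathcal S_{\rm out}$ and store $i$ at $P$ with probability $q_i+q_j-1$; otherwise put $i$ into $\mathcal S_{\rm out}$ and store $j$ at $P$ with probability $q_i+q_j-1$. When only the root stores an index, put it into $\mathcal S_{\rm out}$ iff its probability is $1$. *)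

From HB Require Import structures.
From mathcomp Require Import all_boot all_order all_algebra.
Set Implicit Arguments. Unset Strict Implicit. Unset Printing Implicit Defensive.
Import Order.TTheory GRing.Theory Num.Theory.
Local Open Scope ring_scope.

Inductive btree (n : nat) : Type :=
  | BLeaf of 'I_n
  | BNode of btree n & btree n.

Fixpoint leaves n (t : btree n) : seq 'I_n :=
  match t with
  | BLeaf i => [:: i]
  | BNode l r => leaves l ++ leaves r
  end.

Definition leaves_are_index_set n (t : btree n) : Prop :=
  perm_eq (leaves t) (enum 'I_n).

Section Pivotal.
Variables (R : realFieldType) (n : nat) (q : 'I_n -> R).

Definition dist (A : Type) := seq (R * A).

(* state of a node: stored index, its current probability, and the
   elements put into S_out within the subtree *)
Definition nstate := ('I_n * R * {set 'I_n})%type.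

Definition merge (a b : nstate) : dist nstate :=
  let: (i, qi, S1) := a in
  let: (j, qj, S2) := b in
  let s := qi + qj in
  let Su := S1 :|: S2 in
  if s <= 1 then
    [:: (qi / s, (i, s, Su)); (1 - qi / s, (j, s, Su))]
  else
    let p := (1 - qi) / (2 - qi - qj) in
    [:: (p, (i, s - 1, j |: Su)); (1 - p, (j, s - 1, i |: Su))].

Fixpoint run (t : btree n) : dist nstate :=
  match t with
  | BLeaf i => [:: (1, (i, q i, set0))]
  | BNode l r =>
      flatten [seq flatten [seq [seq (x.1 * y.1 * z.1, z.2) | z <- merge x.2 y.2]
                           | y <- run r] | x <- run l]
  end.

Definition pivotal_output (t : btree n) : dist {set 'I_n} :=
  [seq (x.1, let: (i, p, So) := x.2 in if p == 1 then i |: So else So) | x <- run t].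

Definition Pr (t : btree n) (E : pred {set 'I_n}) : R :=
  \sum_(x <- pivotal_output t) (if E x.2 then x.1 else 0).

End Pivotal.

From Pilot Require Import Defs.
From HB Require Import structures.
From mathcomp Require Import all_boot all_order all_algebra.
From mathcomp Require Import ring lra.
Import Order.TTheory GRing.Theory Num.Theory.
Set Implicit Arguments. Unset Strict Implicit. Unset Printing Implicit Defensive.
Local Open Scope ring_scope.

(* For the run of a subtree put K(S) = Pr[S is contained in the output set of
   the subtree together with its pivot] and F(S) = Pr[S is contained in the
   output set of the subtree].  By induction on the tree, (K, F) is an
   [nc_pair]: every nonnegative combination eK + fF satisfies the negative
   lattice condition M(S) M(S+x+y) <= M(S+x) M(S+y), and the ratio K/F does
   not decrease when an element is added to S.  Since sibling subtrees have
   disjoint leaves and independent runs, the pair of a node is a bilinear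
   expression in the pairs of its children, with a coefficient matrix of
   nonpositive determinant, and such expressions preserve both properties.
   At the root, Pr[S is contained in the output] is K(S) or F(S) according
   to whether the root probability is 1, and the corollary is the lattice
   condition divided by Pr[S is contained in the output]^2. *)

Section NegativeCorrelation.
Variables (R : realFieldType) (I : finType).
Implicit Types (K F M : {set I} -> R) (S L : {set I}) (x y : I).

Definition neg_corr M := forall S x y, x != y ->
  M S * M (x |: (y |: S)) <= M (x |: S) * M (y |: S).

Record nc_pair K F : Prop := NCPair {
  nc_K_ge0 : forall S, 0 <= K S;
  nc_F_ge0 : forall S, 0 <= F S;
  nc_ratio : forall S x, K S * F (x |: S) <= K (x |: S) * F S;
  nc_mix : forall e f, 0 <= e -> 0 <= f -> neg_corr (fun S => e * K S + f * F S)
}.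

Lemma nc_ratio_ge0 K F S x : nc_pair K F ->
  0 <= K (x |: S) * F S - K S * F (x |: S).
Proof. by move=> hKF; rewrite subr_ge0 nc_ratio. Qed.

Lemma neg_corr_ext M M' : M =1 M' -> neg_corr M -> neg_corr M'.
Proof. by move=> eM hM S x y xy; rewrite -!eM; apply: hM. Qed.

Lemma nc_pair_ext K F K' F' : nc_pair K F -> K =1 K' -> F =1 F' -> nc_pair K' F'.
Proof.
move=> [K0 F0 rKF mKF] eK eF; split=> [S|S|S x|e f e0 f0]; rewrite -?eK -?eF //.
by apply: neg_corr_ext (mKF e f e0 f0) => S; rewrite eK eF.
Qed.

Lemma nc_pair_negK K F : nc_pair K F -> neg_corr K.
Proof.
move=> /nc_mix /(_ 1 0 ler01 (lexx 0)); apply: neg_corr_ext => S.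
by rewrite mul1r mul0r addr0.
Qed.

Lemma nc_pair_negF K F : nc_pair K F -> neg_corr F.
Proof.
move=> /nc_mix /(_ 0 1 (lexx 0) ler01); apply: neg_corr_ext => S.
by rewrite mul1r mul0r add0r.
Qed.

Lemma nc_pair_leaf (i : I) :
  nc_pair (fun S => (S \subset [set i])%:R) (fun S => (S \subset set0)%:R).
Proof.
have notin0 x S : (x |: S \subset set0) = false.
  by apply/negbTE/negP => /subsetP /(_ x); rewrite !inE eqxx => /(_ isT).
have notin1 x y S : x != y -> (x |: (y |: S) \subset [set i]) = false.
  move=> xy; apply/negbTE/negP => /subsetP hs.
  move: (hs x (setU11 _ _)) (hs y (setU1r _ (setU11 _ _))) xy.
  by rewrite !inE => /eqP -> /eqP ->; rewrite eqxx.
split=> [S|S|S x|e f e0 f0 S x y xy]; rewrite ?ler0n // ?notin0 ?notin1 //.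
  by rewrite mulr0 mulr_ge0 ?ler0n.
by rewrite !(mulr0, addr0) mulr_ge0 // mulr_ge0 // ler0n.
Qed.

Lemma ler_of_subr_eq (u v a b : R) : 0 <= a -> 0 <= b -> v - u = a * b -> u <= v.
Proof. by move=> a0 b0 e; rewrite -subr_ge0 e mulr_ge0. Qed.

(* The 2x2 matrix of a bilinear form [u^T C w] evaluated at two pairs of
   vectors is [U^T C W], so its determinant factors as [det U * det C * det W]. *)
Lemma bilinear_cross (a b c d k0 k1 f0 f1 g0 g1 h0 h1 : R) :
  a * d <= b * c -> k0 * f1 <= k1 * f0 -> g0 * h1 <= g1 * h0 ->
  let B k f g h := a * (k * g) + b * (k * h) + c * (f * g) + d * (f * h) in
  B k0 f0 g0 h0 * B k1 f1 g1 h1 <= B k1 f1 g0 h0 * B k0 f0 g1 h1.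
Proof.
move=> hC hk hg /=.
apply: (@ler_of_subr_eq _ _ (b * c - a * d) ((k1 * f0 - k0 * f1) * (g1 * h0 - g0 * h1))).
- by rewrite subr_ge0.
- by rewrite mulr_ge0 ?subr_ge0.
- ring.
Qed.

Lemma setU1I_in x S L : x \in L -> (x |: S) :&: L = x |: (S :&: L).
Proof.
move=> xL; apply/setP=> z; rewrite !inE; case: (z =P x) => [->|] //=;
  by rewrite ?xL ?(negbTE xL) ?andbF ?andbT.
Qed.

Lemma setU1I_notin x S L : x \notin L -> (x |: S) :&: L = S :&: L.
Proof.
move=> xL; apply/setP=> z; rewrite !inE; case: (z =P x) => [->|] //=;
  by rewrite ?xL ?(negbTE xL) ?andbF ?andbT.
Qed.

Lemma setU1D_in x S L : x \in L -> (x |: S) :\: L = S :\: L.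
Proof.
move=> xL; apply/setP=> z; rewrite !inE; case: (z =P x) => [->|] //=;
  by rewrite ?xL ?(negbTE xL) ?andbF ?andbT.
Qed.

Lemma setU1D_notin x S L : x \notin L -> (x |: S) :\: L = x |: (S :\: L).
Proof.
move=> xL; apply/setP=> z; rewrite !inE; case: (z =P x) => [->|] //=;
  by rewrite ?xL ?(negbTE xL) ?andbF ?andbT.
Qed.

End NegativeCorrelation.

Section Tensor.
Variables (R : realFieldType) (I : finType) (L : {set I}).
Variables (Kl Fl Kr Fr : {set I} -> R).
Hypotheses (hl : nc_pair Kl Fl) (hr : nc_pair Kr Fr).
Implicit Types (A B : {set I} -> R) (S : {set I}) (x y : I).

(* The inclusion function of two independent runs on disjoint leaf sets, the
   first one inside [L]. *)
Definition tens A B S := A (S :&: L) * B (S :\: L).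

Lemma tens_mix_neg_corr (a b c d : R) :
  0 <= a -> 0 <= b -> 0 <= c -> 0 <= d -> a * d <= b * c ->
  neg_corr (fun S => a * tens Kl Kr S + b * tens Kl Fr S
                     + c * tens Fl Kr S + d * tens Fl Fr S).
Proof.
move=> a0 b0 c0 d0 hC; set M := fun S => _.
have cross S x y : x \in L -> y \notin L ->
    M S * M (x |: (y |: S)) <= M (x |: S) * M (y |: S).
  move=> xL yL; rewrite /M /tens !(setU1I_in _ xL) !(setU1D_in _ xL).
  rewrite !(setU1I_notin _ yL) !(setU1D_notin _ yL).
  exact: bilinear_cross hC (nc_ratio hl _ x) (nc_ratio hr _ y).
move=> S x y xy; case: (boolP (x \in L)) => xL; case: (boolP (y \in L)) => yL.
- rewrite /M /tens !(setU1I_in _ xL) !(setU1D_in _ xL).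
  rewrite !(setU1I_in _ yL) !(setU1D_in _ yL); set U := S :\: L.
  have E T : a * (Kl T * Kr U) + b * (Kl T * Fr U) + c * (Fl T * Kr U) + d * (Fl T * Fr U)
           = (a * Kr U + b * Fr U) * Kl T + (c * Kr U + d * Fr U) * Fl T by ring.
  rewrite !E; apply: (nc_mix hl) xy;
    by rewrite addr_ge0 ?mulr_ge0 ?(nc_K_ge0 hr) ?(nc_F_ge0 hr).
- exact: cross.
- by rewrite setUCA [X in _ <= X]mulrC; apply: cross.
- rewrite /M /tens !(setU1I_notin _ xL) !(setU1D_notin _ xL).
  rewrite !(setU1I_notin _ yL) !(setU1D_notin _ yL); set T := S :&: L.
  have E U : a * (Kl T * Kr U) + b * (Kl T * Fr U) + c * (Fl T * Kr U) + d * (Fl T * Fr U)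
           = (a * Kl T + c * Fl T) * Kr U + (b * Kl T + d * Fl T) * Fr U by ring.
  rewrite !E; apply: (nc_mix hr) xy;
    by rewrite addr_ge0 ?mulr_ge0 ?(nc_K_ge0 hl) ?(nc_F_ge0 hl).
Qed.

Lemma nc_pair_tens_reject (lam : R) : 0 <= lam <= 1 ->
  nc_pair (fun S => lam * tens Kl Fr S + (1 - lam) * tens Fl Kr S) (tens Fl Fr).
Proof.
case/andP=> l0; rewrite -subr_ge0 => l1; split.
- by move=> S; rewrite addr_ge0 ?mulr_ge0 ?(nc_K_ge0 hl, nc_F_ge0 hl, nc_K_ge0 hr, nc_F_ge0 hr).
- by move=> S; rewrite mulr_ge0 ?(nc_F_ge0 hl, nc_F_ge0 hr).
- move=> S x; rewrite /tens; case: (boolP (x \in L)) => xL.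
    rewrite (setU1I_in _ xL) (setU1D_in _ xL).
    by apply: (ler_of_subr_eq (mulr_ge0 l0 (sqr_ge0 (Fr (S :\: L)))) (nc_ratio_ge0 _ x hl)); ring.
  rewrite (setU1I_notin _ xL) (setU1D_notin _ xL).
  by apply: (ler_of_subr_eq (mulr_ge0 l1 (sqr_ge0 (Fl (S :&: L)))) (nc_ratio_ge0 _ x hr)); ring.
- move=> e f e0 f0.
  apply: (neg_corr_ext _ (@tens_mix_neg_corr 0 (e * lam) (e * (1 - lam)) f _ _ _ _ _)) => [S|||||];
    first [by [] | exact: mulr_ge0 | by rewrite mul0r !mulr_ge0 | ring].
Qed.

Lemma nc_pair_tens_accept (mu : R) : 0 <= mu <= 1 ->
  nc_pair (tens Kl Kr) (fun S => mu * tens Fl Kr S + (1 - mu) * tens Kl Fr S).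
Proof.
case/andP=> m0; rewrite -subr_ge0 => m1; split.
- by move=> S; rewrite mulr_ge0 ?(nc_K_ge0 hl, nc_K_ge0 hr).
- by move=> S; rewrite addr_ge0 ?mulr_ge0 ?(nc_K_ge0 hl, nc_F_ge0 hl, nc_K_ge0 hr, nc_F_ge0 hr).
- move=> S x; rewrite /tens; case: (boolP (x \in L)) => xL.
    rewrite (setU1I_in _ xL) (setU1D_in _ xL).
    by apply: (ler_of_subr_eq (mulr_ge0 m0 (sqr_ge0 (Kr (S :\: L)))) (nc_ratio_ge0 _ x hl)); ring.
  rewrite (setU1I_notin _ xL) (setU1D_notin _ xL).
  by apply: (ler_of_subr_eq (mulr_ge0 m1 (sqr_ge0 (Kl (S :&: L)))) (nc_ratio_ge0 _ x hr)); ring.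
- move=> e f e0 f0.
  apply: (neg_corr_ext _ (@tens_mix_neg_corr e (f * (1 - mu)) (f * mu) 0 _ _ _ _ _)) => [S|||||];
    first [by [] | exact: mulr_ge0 | by rewrite mulr0 !mulr_ge0 | ring].
Qed.

End Tensor.

Definition expect (R : realFieldType) (A : Type) (d : dist R A) (g : A -> R) : R :=
  \sum_(x <- d) x.1 * g x.2.

Lemma expect_mul (R : realFieldType) (A B : Type) (d1 : dist R A) (d2 : dist R B) g h :
  expect d1 g * expect d2 h = \sum_(x <- d1) \sum_(y <- d2) x.1 * y.1 * (g x.2 * h y.2).
Proof.
rewrite /expect big_distrl; apply: eq_bigr => x _.
by rewrite big_distrr; apply: eq_bigr => y _; rewrite mulrACA.
Qed.

Section PivotalSampling.
Variables (R : realFieldType) (n : nat) (q : 'I_n -> R).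
Hypothesis q01 : forall i, 0 <= q i <= 1.
Implicit Types (t l r : btree n) (S T L A B : {set 'I_n}).

Fixpoint root_prob t : R :=
  match t with
  | BLeaf i => q i
  | BNode l r => if root_prob l + root_prob r <= 1 then root_prob l + root_prob r
                 else root_prob l + root_prob r - 1
  end.

Lemma root_prob01 t : 0 <= root_prob t <= 1.
Proof.
elim: t => [i|l /andP[? ?] r /andP[? ?]] /=; first exact: q01.
by case: ifP => hs; apply/andP; split; lra.
Qed.

Definition leafset t := [set z in leaves t].

Lemma leafset_node l r : leafset (BNode l r) = leafset l :|: leafset r.
Proof. by apply/setP => z; rewrite !inE mem_cat. Qed.

Lemma mem_merge (ia ib : 'I_n) (pa pb : R) Aa Ab z :
  z \in Defs.merge (ia, pa, Aa) (ib, pb, Ab) ->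
  [/\ z.2.1.2 = (if pa + pb <= 1 then pa + pb else pa + pb - 1),
      z.2.1.1 \in [set ia; ib] & z.2.2 \subset ia |: (ib |: (Aa :|: Ab))].
Proof.
have sub1 := subsetU1 ia (ib |: (Aa :|: Ab)).
have sub2 := subset_trans (subsetU1 ib (Aa :|: Ab)) sub1.
rewrite /Defs.merge; case: ifP => _; rewrite !inE => /orP[]/eqP-> /=;
  rewrite ?inE ?eqxx ?orbT //; split=> //.
exact/setUS/subsetU1.
Qed.

Lemma mem_run_node l r x : x \in run q (BNode l r) ->
  exists a b z, [/\ a \in run q l, b \in run q r,
    z \in Defs.merge a.2 b.2 & x = (a.1 * b.1 * z.1, z.2)].
Proof.
move=> /flattenP [_ /mapP [a ha ->]] /flattenP [_ /mapP [b hb ->]] /mapP [z hz ->].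
by exists a, b, z.
Qed.

Lemma mem_run t x : x \in run q t ->
  [/\ x.2.1.2 = root_prob t, x.2.1.1 \in leafset t & x.2.2 \subset leafset t].
Proof.
elim: t x => [i|l IHl r IHr] x.
  by rewrite inE => /eqP -> /=; rewrite inE mem_seq1 eqxx sub0set.
case/mem_run_node => -[wa [[ia pa] Aa]] [[wb [[ib pb] Ab]] [z [/IHl[/= -> iaL AaL]]]].
case/IHr => /= -> ibR AbR /mem_merge[pz iz Az] -> /=; rewrite leafset_node; split=> //.
- by case/set2P: iz => ->; rewrite in_setU ?iaL ?ibR ?orbT.
- apply: (subset_trans Az); rewrite !subUset !sub1set !in_setU iaL ibR orbT /=.
  by rewrite (subset_trans AaL (subsetUl _ _)) (subset_trans AbR (subsetUr _ _)).
Qed.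

Definition settled S (s : nstate R n) : R := (S \subset s.2)%:R.
Definition settled_or_pivot S (s : nstate R n) : R := (S \subset s.1.1 |: s.2)%:R.

Definition Pr_settled t S := expect (run q t) (settled S).
Definition Pr_settled_or_pivot t S := expect (run q t) (settled_or_pivot S).

Definition left_pivot_weight (a b : R) : R :=
  if a + b <= 1 then a / (a + b) else (1 - a) / (2 - a - b).

Lemma divDr01 (a b : R) : 0 <= a -> 0 <= b -> 0 <= a / (a + b) <= 1.
Proof.
move=> a0 b0; have [->|ab0] := eqVneq (a + b) 0; first by rewrite invr0 mulr0 lexx ler01.
have ab_gt0 : 0 < a + b by rewrite lt_def ab0 addr_ge0.
by rewrite divr_ge0 ?ler_pdivrMr ?mul1r ?lerDl // ltW.
Qed.

Lemma left_pivot_weight01 (a b : R) : 0 <= a <= 1 -> 0 <= b <= 1 ->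
  0 <= left_pivot_weight a b <= 1.
Proof.
rewrite /left_pivot_weight => /andP[a0 a1] /andP[b0 b1]; case: ifP => _.
  exact: divDr01.
by rewrite (_ : 2 - a - b = (1 - a) + (1 - b)) ?divDr01 ?subr_ge0 //; ring.
Qed.

Lemma subsetU_split S L A B : A \subset L -> B \subset ~: L ->
  (S \subset A :|: B) = (S :&: L \subset A) && (S :\: L \subset B).
Proof.
move=> /subsetP AL /subsetP BL; apply/idP/andP.
  move=> /subsetP SAB; split; apply/subsetP => z.
    rewrite in_setI => /andP[/SAB]; rewrite in_setU => /orP[] // zB zL.
    by have := BL z zB; rewrite in_setC zL.
  rewrite in_setD => /andP[zL /SAB]; rewrite in_setU => /orP[] // zA.
  by rewrite AL in zL.
case=> /subsetP SLA /subsetP SLB; apply/subsetP => z zS; rewrite in_setU.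
case: (boolP (z \in L)) => zL.
  by rewrite SLA // in_setI zS zL.
by rewrite SLB ?orbT // in_setD zS zL.
Qed.

Lemma natr_subsetU_split S L A B : A \subset L -> B \subset ~: L ->
  ((S \subset A :|: B)%:R : R) = (S :&: L \subset A)%:R * (S :\: L \subset B)%:R.
Proof. by move=> AL BL; rewrite (subsetU_split _ AL BL) -natrM mulnb. Qed.

Section Merge.
Variables (ia ib : 'I_n) (pa pb : R) (Aa Ab L : {set 'I_n}).
Hypotheses (iaL : ia \in L) (AaL : Aa \subset L) (ibL : ib \in ~: L) (AbL : Ab \subset ~: L).

Let iaAaL : ia |: Aa \subset L. Proof. by rewrite subUset sub1set iaL. Qed.
Let ibAbL : ib |: Ab \subset ~: L. Proof. by rewrite subUset sub1set ibL. Qed.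
Let w := left_pivot_weight pa pb.

Lemma expect_merge_settled S :
  expect (Defs.merge (ia, pa, Aa) (ib, pb, Ab)) (settled S) =
  if pa + pb <= 1 then settled (S :&: L) (ia, pa, Aa) * settled (S :\: L) (ib, pb, Ab)
  else w * (settled (S :&: L) (ia, pa, Aa) * settled_or_pivot (S :\: L) (ib, pb, Ab))
     + (1 - w) * (settled_or_pivot (S :&: L) (ia, pa, Aa) * settled (S :\: L) (ib, pb, Ab)).
Proof.
rewrite /expect /Defs.merge /w /left_pivot_weight /settled /settled_or_pivot /=.
case: ifP => _; rewrite !big_cons big_nil /= addr0.
  by rewrite (natr_subsetU_split S AaL AbL); ring.
by rewrite (setUCA [set ib]) (setUA [set ia]) (natr_subsetU_split S AaL ibAbL)
  (natr_subsetU_split S iaAaL AbL).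
Qed.

Lemma expect_merge_settled_or_pivot S :
  expect (Defs.merge (ia, pa, Aa) (ib, pb, Ab)) (settled_or_pivot S) =
  if pa + pb <= 1 then
    w * (settled_or_pivot (S :&: L) (ia, pa, Aa) * settled (S :\: L) (ib, pb, Ab))
    + (1 - w) * (settled (S :&: L) (ia, pa, Aa) * settled_or_pivot (S :\: L) (ib, pb, Ab))
  else settled_or_pivot (S :&: L) (ia, pa, Aa) * settled_or_pivot (S :\: L) (ib, pb, Ab).
Proof.
have E : ia |: (ib |: (Aa :|: Ab)) = (ia |: Aa) :|: (ib |: Ab).
  by rewrite (setUCA [set ib]) setUA.
rewrite /expect /Defs.merge /w /left_pivot_weight /settled /settled_or_pivot /=.
case: ifP => _; rewrite !big_cons big_nil /= addr0.
  by rewrite (setUCA [set ib]) (setUA [set ia]) (natr_subsetU_split S AaL ibAbL)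
    (natr_subsetU_split S iaAaL AbL).
by rewrite (setUCA [set ib]) E (natr_subsetU_split S iaAaL ibAbL); ring.
Qed.

End Merge.

Lemma expect_run_node l r g : expect (run q (BNode l r)) g =
  \sum_(x <- run q l) \sum_(y <- run q r) x.1 * y.1 * expect (Defs.merge x.2 y.2) g.
Proof.
rewrite /expect /= big_flatten /= big_map; apply: eq_bigr => x _.
rewrite big_flatten big_map; apply: eq_bigr => y _.
by rewrite big_map mulr_sumr; apply: eq_bigr => z _; rewrite mulrA.
Qed.

Lemma leafset_node_disjoint l r : uniq (leaves (BNode l r)) ->
  leafset r \subset ~: leafset l.
Proof.
rewrite /= cat_uniq => /and3P[_ /hasPn dis _].
by apply/subsetP => z; rewrite !inE => /dis.
Qed.

Lemma Pr_settled_node l r S : uniq (leaves (BNode l r)) ->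
  Pr_settled (BNode l r) S =
  if root_prob l + root_prob r <= 1 then tens (leafset l) (Pr_settled l) (Pr_settled r) S
  else left_pivot_weight (root_prob l) (root_prob r)
         * tens (leafset l) (Pr_settled l) (Pr_settled_or_pivot r) S
       + (1 - left_pivot_weight (root_prob l) (root_prob r))
         * tens (leafset l) (Pr_settled_or_pivot l) (Pr_settled r) S.
Proof.
move=> /leafset_node_disjoint rl; rewrite /Pr_settled expect_run_node.
case: ifP => hs; rewrite /tens !expect_mul ?mulr_sumr -?big_split;
  apply: eq_big_seq => -[wa [[ia pa] Aa]] /mem_run[/= pl iaL AaL];
  rewrite ?mulr_sumr -?big_split;
  apply: eq_big_seq => -[wb [[ib pb] Ab]] /mem_run[/= pr ibR AbR] /=;
  rewrite (expect_merge_settled _ _ iaL AaL (subsetP rl _ ibR) (subset_trans AbR rl));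
  rewrite pl pr hs; ring.
Qed.

Lemma Pr_settled_or_pivot_node l r S : uniq (leaves (BNode l r)) ->
  Pr_settled_or_pivot (BNode l r) S =
  if root_prob l + root_prob r <= 1 then
    left_pivot_weight (root_prob l) (root_prob r)
      * tens (leafset l) (Pr_settled_or_pivot l) (Pr_settled r) S
    + (1 - left_pivot_weight (root_prob l) (root_prob r))
      * tens (leafset l) (Pr_settled l) (Pr_settled_or_pivot r) S
  else tens (leafset l) (Pr_settled_or_pivot l) (Pr_settled_or_pivot r) S.
Proof.
move=> /leafset_node_disjoint rl; rewrite /Pr_settled_or_pivot expect_run_node.
case: ifP => hs; rewrite /tens !expect_mul ?mulr_sumr -?big_split;
  apply: eq_big_seq => -[wa [[ia pa] Aa]] /mem_run[/= pl iaL AaL];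
  rewrite ?mulr_sumr -?big_split;
  apply: eq_big_seq => -[wb [[ib pb] Ab]] /mem_run[/= pr ibR AbR] /=;
  rewrite (expect_merge_settled_or_pivot _ _ iaL AaL (subsetP rl _ ibR) (subset_trans AbR rl));
  rewrite pl pr hs; ring.
Qed.

Lemma nc_pair_run t : uniq (leaves t) -> nc_pair (Pr_settled_or_pivot t) (Pr_settled t).
Proof.
elim: t => [i|l IHl r IHr] ulr.
  move/nc_pair_ext: (nc_pair_leaf R i); apply => S;
    rewrite /Pr_settled_or_pivot /Pr_settled /expect big_seq1 mul1r;
    by rewrite /settled_or_pivot /settled /= ?setU0.
have w01 := left_pivot_weight01 (root_prob01 l) (root_prob01 r).
move: (ulr); rewrite /= cat_uniq => /and3P[/IHl hl _ /IHr hr].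
case hs : (root_prob l + root_prob r <= 1).
- move/nc_pair_ext: (nc_pair_tens_reject (leafset l) hl hr w01); apply => S;
    by rewrite ?(Pr_settled_or_pivot_node _ ulr) ?(Pr_settled_node _ ulr) hs.
- move/nc_pair_ext: (nc_pair_tens_accept (leafset l) hl hr w01); apply => S;
    by rewrite ?(Pr_settled_or_pivot_node _ ulr) ?(Pr_settled_node _ ulr) hs.
Qed.

Lemma eq_Pr t (E E' : pred {set 'I_n}) : E =1 E' -> Pr q t E = Pr q t E'.
Proof. by move=> eE; apply: eq_bigr => x _; rewrite eE. Qed.

Lemma Pr_subset t T : Pr q t (fun X => T \subset X) =
  if root_prob t == 1 then Pr_settled_or_pivot t T else Pr_settled t T.
Proof.
rewrite /Pr /pivotal_output big_map /Pr_settled /Pr_settled_or_pivot /expect.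
case: ifP => h1; apply: eq_big_seq => -[w [[i p] A]] /mem_run [/= -> _ _];
  by rewrite /settled /settled_or_pivot /= h1; case: ifP; rewrite ?mulr1 ?mulr0.
Qed.

Lemma neg_corr_Pr_subset t : uniq (leaves t) ->
  neg_corr (fun T => Pr q t (fun X => T \subset X)).
Proof.
move=> /nc_pair_run hKF; have [h1|h1] := boolP (root_prob t == 1).
  by apply: (neg_corr_ext _ (nc_pair_negK hKF)) => T; rewrite Pr_subset h1.
by apply: (neg_corr_ext _ (nc_pair_negF hKF)) => T; rewrite Pr_subset (negbTE h1).
Qed.

End PivotalSampling.

Lemma ler_cond_mul (R : realFieldType) (p a b c : R) :
  0 < p -> p * c <= a * b -> c / p <= a / p * (b / p).
Proof.
move=> p0 h; rewrite -subr_ge0 (_ : _ - _ = (a * b - p * c) / (p * p)).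
  by rewrite divr_ge0 ?subr_ge0 // mulr_ge0 // ltW.
by field; rewrite lt0r_neq0.
Qed.

Theorem corollaryE3 (R : realFieldType) (n : nat) (t : btree n) (q : 'I_n -> R)
  (ht : leaves_are_index_set t)
  (hq : forall i, 0 <= q i <= 1)
  (hsum : exists k : nat, \sum_(i < n) q i = k%:R)
  (S : {set 'I_n}) (i j : 'I_n)
  (hS : 0 < Pr q t (fun X => S \subset X))
  (hiS : i \notin S) (hjS : j \notin S) (hij : i != j) :
  let PS := Pr q t (fun X => S \subset X) in
  (Pr q t (fun X => (i \in X) && (S \subset X)) / PS) *
  (Pr q t (fun X => (j \in X) && (S \subset X)) / PS)
  >= Pr q t (fun X => [&& i \in X, j \in X & S \subset X]) / PS.
Proof.
have hu : uniq (leaves t) by rewrite (perm_uniq ht) enum_uniq.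
have Pr1 (x : 'I_n) : Pr q t (fun X => (x \in X) && (S \subset X))
                      = Pr q t (fun X => x |: S \subset X).
  by apply: eq_Pr => X; rewrite subUset sub1set.
have Pr2 : Pr q t (fun X => [&& i \in X, j \in X & S \subset X])
           = Pr q t (fun X => i |: (j |: S) \subset X).
  by apply: eq_Pr => X; rewrite !subUset !sub1set.
rewrite /= !Pr1 Pr2.
exact: ler_cond_mul hS (neg_corr_Pr_subset hq hu S hij).
Qed.
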